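(* For every $n\equiv 9 \pmod{16}$ (with $n\geq 9$), there exists an almost 2-perfect maximum 8-cycle packing of $K_n$.
   Context: An 8-cycle packing of $K_n$ on vertex set $\mathcal{X}$ is a triple $(\mathcal{X},\mathcal{C},\mathcal{L})$ with $\mathcal{C}$ a collection of pairwise edge-disjoint 8-cycles of $K_n$ and leave $\mathcal{L}$ the set of edges in no cycle of $\mathcal{C}$; it is maximum if $|\mathcal{L}|$ is minimum among all 8-cycle packings of $K_n$. For an 8-cycle $C$, an inside 8-cycle of $C$ is an 8-cycle on the same vertex set sharing no edge with $C$. The packing is almost 2-perfect if one can choose for each $C\in\mathcal{C}$ an inside 8-cycle $C'$ such that $(\mathcal{X},\{C'\},\mathcal{L})$ is again an 8-cycle packing with the same leave. *)

From mathcomp Require Import all_boot.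
Set Implicit Arguments. Unset Strict Implicit. Unset Printing Implicit Defensive.

Definition Kn_edges (n : nat) : {set {set 'I_n}} := [set e : {set 'I_n} | #|e| == 2].

(* An 8-cycle is given by a cyclic sequence of 8 distinct vertices
   (c_0, ..., c_7); its edges are {c_i, c_(i+1 mod 8)}. *)
Definition cycle8 (n : nat) := 8.-tuple 'I_n.

Definition is_cycle8 n (c : cycle8 n) : bool := uniq c.

Definition cyc_edges n (c : cycle8 n) : {set {set 'I_n}} :=
  [set [set tnth c i; tnth c (ordS i)] | i : 'I_8].

Definition cyc_verts n (c : cycle8 n) : {set 'I_n} := [set x in c].

Definition is_packing n (Cs : seq (cycle8 n)) : bool :=
  all (@is_cycle8 n) Cs &&
  pairwise (fun c d => [disjoint cyc_edges c & cyc_edges d]) Cs.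

Definition leave n (Cs : seq (cycle8 n)) : {set {set 'I_n}} :=
  Kn_edges n :\: \bigcup_(c <- Cs) cyc_edges c.

Definition maximum_packing n (Cs : seq (cycle8 n)) : Prop :=
  is_packing Cs /\
  forall Ds : seq (cycle8 n), is_packing Ds -> #|leave Cs| <= #|leave Ds|.

Definition inside n (c c' : cycle8 n) : bool :=
  [&& is_cycle8 c', cyc_verts c' == cyc_verts c &
      [disjoint cyc_edges c & cyc_edges c']].

Definition almost_2perfect n (Cs : seq (cycle8 n)) : Prop :=
  exists Cs' : seq (cycle8 n),
    [/\ all2 (@inside n) Cs Cs', is_packing Cs' & leave Cs' = leave Cs].

From mathcomp Require Import all_boot zify.
Set Implicit Arguments. Unset Strict Implicit. Unset Printing Implicit Defensive.

(* Write n = 16k + 9 and split the vertices into the point 0 and 2k + 1 groups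
   of eight, grouping them further into the pair {group 0} and the pairs
   {group 2j-1, group 2j}, 1 <= j <= k.  K_n is the edge-disjoint union of K_9 on
   0 and group 0, of a K_17 on 0 and each other pair, and of a K_{8,8} between
   any two groups lying in different pairs.  Each such block carries an explicit
   family of edge-disjoint 8-cycles (for K_9: four cycles, leaving four edges)
   together with inside 8-cycles covering the same edges; these local facts are
   checked by computation.  Relabelling them into K_n gives an almost 2-perfect
   packing whose leave has 4 edges.  Every packing leaves C(n,2) minus a multiple
   of 8 edges, so a leave of fewer than 8 edges is minimum. *)

Lemma set2_eq (T : finType) (a b c d : T) :
  [set a; b] = [set c; d] -> (a = c /\ b = d) \/ (a = d /\ b = c).
Proof.
move=> E.
have : a \in [set c; d] by rewrite -E set21.
have : b \in [set c; d] by rewrite -E set22.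
have : c \in [set a; b] by rewrite E set21.
have : d \in [set a; b] by rewrite E set22.
by rewrite !inE => /orP[]/eqP-> /orP[]/eqP-> /orP[]/eqP ? /orP[]/eqP ?; subst; auto.
Qed.

Lemma ordS8_neq (i : 'I_8) : ordS i != i.
Proof. by case: i => [[|[|[|[|[|[|[|[|]]]]]]]] ]. Qed.

Lemma ordSS8_neq (i : 'I_8) : ordS (ordS i) != i.
Proof. by case: i => [[|[|[|[|[|[|[|[|]]]]]]]] ]. Qed.

Lemma bigcup_seqP (I : eqType) (T : finType) (r : seq I) (F : I -> {set T}) x :
  reflect (exists2 i, i \in r & x \in F i) (x \in \bigcup_(i <- r) F i).
Proof.
elim: r => [|i r IH]; first by rewrite big_nil inE; constructor => -[].
rewrite big_cons inE; apply: (iffP orP) => [[xi | /IH[j jr xj]] | [j]].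
- by exists i; rewrite ?mem_head.
- by exists j; rewrite // inE jr orbT.
- by rewrite inE => /orP[/eqP-> | jr] xj; [left | right; apply/IH; exists j].
Qed.

Lemma pairwise_flatten_map (A T : eqType) (r : rel T) (F : A -> seq T) (bs : seq A) :
  uniq bs -> {in bs, forall b, pairwise r (F b)} ->
  {in bs &, forall b b', b != b' -> allrel r (F b) (F b')} ->
  pairwise r (flatten (map F bs)).
Proof.
elim: bs => [|b bs IH] //= /andP[bNbs uniq_bs] rF rFF.
have in_bs c : c \in bs -> c \in b :: bs by rewrite inE => ->; rewrite orbT.
rewrite pairwise_cat rF ?mem_head //=; apply/andP; split; last first.
  apply: IH => // [c /in_bs | c c' /in_bs cbs /in_bs c'bs]; [exact: rF | exact: rFF].
apply/allrelP => x y xFb /flatten_mapP[b' b'bs yFb'].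
apply: (allrelP (rFF b b' _ _ _)) => //; rewrite ?mem_head ?in_bs //.
by apply: contraNneq bNbs => ->.
Qed.

Lemma all2_cat (S T : Type) (r : S -> T -> bool) s1 s2 t1 t2 :
  all2 r s1 t1 -> all2 r s2 t2 -> all2 r (s1 ++ s2) (t1 ++ t2).
Proof. by elim: s1 t1 => [|x s1 IH] [|y t1] //= /andP[-> /IH]. Qed.

Lemma all2_flatten_map (A : eqType) (S T : Type) (r : S -> T -> bool)
    (F : A -> seq S) (G : A -> seq T) (bs : seq A) :
  {in bs, forall b, all2 r (F b) (G b)} ->
  all2 r (flatten (map F bs)) (flatten (map G bs)).
Proof.
elim: bs => //= b bs IH rFG; apply: all2_cat; first by apply: rFG; rewrite mem_head.
by apply: IH => c cbs; apply: rFG; rewrite inE cbs orbT.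
Qed.

Section Packings.
Variable n : nat.
Implicit Types (c : cycle8 n) (Cs : seq (cycle8 n)).

Lemma cyc_edgesP c e :
  reflect (exists i : 'I_8, e = [set tnth c i; tnth c (ordS i)]) (e \in cyc_edges c).
Proof. by apply: (iffP imsetP) => [[i _ ->] | [i ->]]; exists i. Qed.

Lemma card_cyc_edges c : is_cycle8 c -> #|cyc_edges c| = 8.
Proof.
move=> /tuple_uniqP inj; rewrite card_in_imset ?card_ord //.
move=> i j _ _ /set2_eq[[/inj -> _] | [/inj ij /inj ji]] //.
by move: (ordSS8_neq j); rewrite -ij ji eqxx.
Qed.

Lemma cyc_edges_sub c : is_cycle8 c -> cyc_edges c \subset Kn_edges n.
Proof.
move=> /tuple_uniqP inj; apply/subsetP => e /cyc_edgesP[i ->].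
rewrite inE cards2; case: (tnth c i =P tnth c (ordS i)) => // /inj eq_i.
by move: (ordS8_neq i); rewrite -eq_i eqxx.
Qed.

Lemma card_packing_edges Cs :
  is_packing Cs -> #|\bigcup_(c <- Cs) cyc_edges c| = 8 * size Cs.
Proof.
elim: Cs => [|c Cs IH]; first by rewrite big_nil cards0.
rewrite /is_packing /= => /andP[/andP[cyc_c cyc_Cs] /andP[disj_c pw_Cs]].
have disj : [disjoint cyc_edges c & \bigcup_(d <- Cs) cyc_edges d].
  rewrite disjoint_subset; apply/subsetP => e ec; rewrite inE.
  apply/negP => /bigcup_seqP[d dCs ed].
  by move: (allP disj_c d dCs) => /disjointFr /(_ ec); rewrite ed.
rewrite big_cons cardsU disjoint_setI0 // cards0 subn0 IH; last exact/andP.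
by rewrite card_cyc_edges // mulnS.
Qed.

Lemma card_leave Cs : is_packing Cs ->
  #|leave Cs| = 'C(n, 2) - 8 * size Cs /\ 8 * size Cs <= 'C(n, 2).
Proof.
move=> pCs; have sub : \bigcup_(c <- Cs) cyc_edges c \subset Kn_edges n.
  apply/subsetP => e /bigcup_seqP[c cCs]; apply/subsetP/cyc_edges_sub.
  by case/andP: pCs => /allP->.
have card_Kn : #|Kn_edges n| = 'C(n, 2) by rewrite card_draws card_ord.
rewrite /leave cardsD (setIidPr sub) (card_packing_edges pCs) -card_Kn.
by split => //; rewrite -(card_packing_edges pCs) subset_leq_card.
Qed.

Lemma leave_lt8_maximum Cs : is_packing Cs -> #|leave Cs| < 8 -> maximum_packing Cs.
Proof.
move=> pCs small; split=> // Ds pDs.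
by case: (card_leave pCs) small => -> _; case: (card_leave pDs) => -> le_Ds; lia.
Qed.

End Packings.

(* The 8-cycles of a block are written on natural-number labels, so that the
   checks below reduce by computation. *)
Definition tedge (t : 8.-tuple nat) (i : nat) : nat * nat :=
  (nth 0 t i, nth 0 t (i.+1 %% 8)).

Definition tedges (t : 8.-tuple nat) : seq (nat * nat) := map (tedge t) (iota 0 8).

Definition same_edge (p q : nat * nat) : bool := (p == q) || (p == (q.2, q.1)).

Definition tdisjoint (t s : 8.-tuple nat) : bool :=
  all (fun p => ~~ has (same_edge p) (tedges s)) (tedges t).

Definition tinside (t t' : 8.-tuple nat) : bool := perm_eq t t' && tdisjoint t t'.

Definition tcovers (T T' : seq (8.-tuple nat)) : bool :=
  all (fun t' => all (fun p => has (fun t => has (same_edge p) (tedges t)) T)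
                     (tedges t')) T'.

Definition local_cycle (ledge : rel nat) (t : 8.-tuple nat) : bool :=
  uniq t && all (fun p => ledge p.1 p.2) (tedges t).

Definition local_design (ledge : rel nat) (C D : seq (8.-tuple nat)) : bool :=
  [&& all (local_cycle ledge) C, all (local_cycle ledge) D, pairwise tdisjoint C,
      pairwise tdisjoint D, all2 tinside C D, tcovers C D & tcovers D C].

(* Blocks [b \in bs] with local labels [0 .. order b - 1], relabelled into K_n by
   [emb b]; [key] recovers from an edge the block it comes from, which makes the
   images of different blocks edge-disjoint. *)
Section Lifting.
Variables (n : nat) (B : eqType).
Variables (order : B -> nat) (ledge : B -> rel nat).
Variables (emb : B -> nat -> 'I_n) (key : 'I_n -> 'I_n -> B) (bs : seq B).

Hypothesis uniq_bs : uniq bs.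
Hypothesis ledge_lt : forall b u v, ledge b u v -> (u < order b) && (v < order b).
Hypothesis emb_inj : forall b u v, b \in bs ->
  u < order b -> v < order b -> emb b u = emb b v -> u = v.
Hypothesis keyC : forall x y, key x y = key y x.
Hypothesis key_emb : forall b u v, b \in bs -> ledge b u v -> key (emb b u) (emb b v) = b.

Definition lift (b : B) (t : 8.-tuple nat) : cycle8 n := [tuple of map (emb b) t].

Definition lifts (T : B -> seq (8.-tuple nat)) : seq (cycle8 n) :=
  flatten [seq [seq lift b t | t <- T b] | b <- bs].

Lemma lift_edgesP b t e :
  reflect (exists2 p, p \in tedges t & e = [set emb b p.1; emb b p.2])
          (e \in cyc_edges (lift b t)).
Proof.
apply: (iffP (cyc_edgesP _ _)) => [[i ->] | [p /mapP[j]]].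
  exists (tedge t i); first by apply: map_f; rewrite mem_iota ltn_ord.
  by rewrite !tnth_map !(tnth_nth 0).
rewrite mem_iota => /= j8 -> ->; exists (Ordinal j8).
by rewrite !tnth_map !(tnth_nth 0).
Qed.

Lemma local_cycle_lt b t x : local_cycle (ledge b) t -> x \in t -> x < order b.
Proof.
case/andP=> _ /allP edges /(nthP 0)[i ti <-].
have /edges/ledge_lt/andP[] // : tedge t i \in tedges t.
by apply: map_f; rewrite mem_iota -(size_tuple t).
Qed.

Lemma lift_cycle b t : b \in bs -> local_cycle (ledge b) t -> is_cycle8 (lift b t).
Proof.
move=> bbs cyc_t; rewrite /is_cycle8 map_inj_in_uniq; first by case/andP: cyc_t.
by move=> x y xt yt; apply: emb_inj (local_cycle_lt cyc_t xt) (local_cycle_lt cyc_t yt).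
Qed.

Lemma lift_same_edge b p q :
  same_edge p q -> [set emb b p.1; emb b p.2] = [set emb b q.1; emb b q.2].
Proof. by case/orP=> /eqP->; rewrite // setUC. Qed.

Lemma lift_edge_inj b p q : b \in bs -> ledge b p.1 p.2 -> ledge b q.1 q.2 ->
  [set emb b p.1; emb b p.2] = [set emb b q.1; emb b q.2] -> same_edge p q.
Proof.
case: p q => [u v] [u' v'] /= bbs /ledge_lt/andP[u_lt v_lt] /ledge_lt/andP[u'_lt v'_lt].
rewrite /same_edge; case/set2_eq=> -[E1 E2].
  by rewrite (emb_inj bbs u_lt u'_lt E1) (emb_inj bbs v_lt v'_lt E2) eqxx.
by rewrite (emb_inj bbs u_lt v'_lt E1) (emb_inj bbs v_lt u'_lt E2) eqxx orbT.
Qed.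

Lemma lift_disjoint b b' t s : b \in bs -> b' \in bs ->
  local_cycle (ledge b) t -> local_cycle (ledge b') s -> (b = b' -> tdisjoint t s) ->
  [disjoint cyc_edges (lift b t) & cyc_edges (lift b' s)].
Proof.
move=> bbs b'bs /andP[_ /allP edges_t] /andP[_ /allP edges_s] disj_ts.
rewrite disjoint_subset; apply/subsetP => e /lift_edgesP[p pt ->]; rewrite inE.
apply/negP => /lift_edgesP[q qs pq].
have bb' : b = b'.
  rewrite -(key_emb bbs (edges_t p pt)) -(key_emb b'bs (edges_s q qs)).
  by case/set2_eq: pq => -[E1 E2]; rewrite E1 E2 // keyC.
subst b'; move/negP: (allP (disj_ts erefl) p pt); apply; apply/hasP.
by exists q => //; apply: lift_edge_inj bbs (edges_t p pt) (edges_s q qs) pq.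
Qed.

Lemma lift_inside b t t' : b \in bs ->
  local_cycle (ledge b) t -> local_cycle (ledge b) t' -> tinside t t' ->
  inside (lift b t) (lift b t').
Proof.
move=> bbs cyc_t cyc_t' /andP[perm_tt' disj_tt'].
apply/and3P; split; [exact: lift_cycle | | exact: lift_disjoint].
by apply/eqP/setP => x; rewrite !inE; apply/perm_mem/perm_map; rewrite perm_sym.
Qed.

Lemma lift_covered b T T' : tcovers T T' ->
  \bigcup_(t <- T') cyc_edges (lift b t) \subset \bigcup_(t <- T) cyc_edges (lift b t).
Proof.
move=> /allP cov; apply/subsetP => e /bigcup_seqP[t' t'T' /lift_edgesP[p pt' ->]].
have /hasP[t tT /hasP[q qt pq]] := allP (cov t' t'T') p pt'.
apply/bigcup_seqP; exists t => //; apply/lift_edgesP; exists q => //.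
exact: lift_same_edge.
Qed.

Lemma lifts_packing T :
  {in bs, forall b, all (local_cycle (ledge b)) (T b) && pairwise tdisjoint (T b)} ->
  is_packing (lifts T).
Proof.
move=> ok_T; apply/andP; split.
  apply/allP => c /flatten_mapP[b bbs /mapP[t tT ->]].
  by apply: lift_cycle => //; case/andP: (ok_T b bbs) => /allP->.
apply: pairwise_flatten_map => // [b bbs | b b' bbs b'bs neq_bb'].
  case/andP: (ok_T b bbs) => cyc_T disj_T; rewrite pairwise_map.
  apply: (sub_in_pairwise _ cyc_T disj_T) => t s cyc_t cyc_s disj_ts.
  exact: lift_disjoint.
apply/allrelP => _ _ /mapP[t tT ->] /mapP[s sT ->].
case/andP: (ok_T b bbs) => /allP cyc_T _; case/andP: (ok_T b' b'bs) => /allP cyc_T' _.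
by apply: lift_disjoint; rewrite ?cyc_T ?cyc_T' // => eq_bb'; rewrite eq_bb' eqxx in neq_bb'.
Qed.

Lemma size_lifts T : size (lifts T) = sumn [seq size (T b) | b <- bs].
Proof.
rewrite size_flatten /shape -map_comp; congr sumn.
by apply: eq_map => b /=; rewrite size_map.
Qed.

Variables C D : B -> seq (8.-tuple nat).
Hypothesis designs : {in bs, forall b, local_design (ledge b) (C b) (D b)}.

Lemma lifts_almost_2perfect : is_packing (lifts C) /\ almost_2perfect (lifts C).
Proof.
have [pC pD] : is_packing (lifts C) /\ is_packing (lifts D).
  by split; apply: lifts_packing => b /designs/and5P[? ? ? ? _]; apply/andP.
split=> //; exists (lifts D); split=> //.
  apply: all2_flatten_map => b bbs.
  case/and5P: (designs bbs) => cyc_C cyc_D _ _ /and3P[ins_CD _ _].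
  elim: (C b) (D b) cyc_C cyc_D ins_CD => [|t Cb IH] [|t' Db] //=.
  move=> /andP[cyc_t cyc_Cb] /andP[cyc_t' cyc_Db] /andP[ins_tt' ins_rest].
  by rewrite lift_inside // IH.
rewrite /leave /lifts !big_flatten /= !big_map; congr (_ :\: _).
apply: eq_big_seq => b /designs/and5P[_ _ _ _ /and3P[_ covCD covDC]].
by rewrite !big_map; apply/eqP; rewrite eqEsubset !lift_covered.
Qed.

End Lifting.

Inductive kind := K9 | K17 | K88.

Definition kind_order (k : kind) : nat :=
  match k with K9 => 9 | K17 => 17 | K88 => 16 end.

Definition kind_edge (k : kind) : rel nat := fun u v =>
  [&& u != v, u < kind_order k, v < kind_order k &
      if k is K88 then (u < 8) != (v < 8) else true].

Definition shift17 (t : 8.-tuple nat) (i : nat) : 8.-tuple nat :=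
  [tuple of map (fun x => (x + i) %% 17) t].

Definition design (k : kind) : seq (8.-tuple nat) :=
  match k with
  | K9 => [:: [tuple 0; 1; 7; 5; 2; 8; 3; 6]; [tuple 0; 2; 6; 5; 3; 7; 4; 8];
              [tuple 0; 3; 1; 8; 5; 4; 6; 7]; [tuple 0; 4; 2; 7; 8; 6; 1; 5]]
  | K17 => [seq shift17 [tuple 0; 1; 3; 6; 2; 7; 16; 10] i | i <- iota 0 17]
  | K88 => [:: [tuple 0; 8; 1; 9; 2; 10; 3; 11]; [tuple 0; 9; 3; 8; 2; 11; 1; 10];
               [tuple 0; 12; 1; 13; 2; 14; 3; 15]; [tuple 0; 13; 3; 12; 2; 15; 1; 14];
               [tuple 4; 8; 5; 9; 6; 10; 7; 11]; [tuple 4; 9; 7; 8; 6; 11; 5; 10];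
               [tuple 4; 12; 5; 13; 6; 14; 7; 15]; [tuple 4; 13; 7; 12; 6; 15; 5; 14]]
  end.

Definition inside_design (k : kind) : seq (8.-tuple nat) :=
  match k with
  | K9 => [:: [tuple 0; 2; 7; 3; 1; 6; 5; 8]; [tuple 0; 3; 8; 2; 4; 6; 7; 5];
              [tuple 0; 1; 5; 3; 6; 8; 7; 4]; [tuple 0; 6; 2; 5; 4; 8; 1; 7]]
  | K17 => [seq shift17 [tuple 0; 6; 1; 16; 3; 2; 10; 7] i | i <- iota 0 17]
  | K88 => [:: [tuple 0; 9; 3; 8; 2; 11; 1; 10]; [tuple 0; 8; 1; 9; 2; 10; 3; 11];
               [tuple 0; 13; 3; 12; 2; 15; 1; 14]; [tuple 0; 12; 1; 13; 2; 14; 3; 15];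
               [tuple 4; 9; 7; 8; 6; 11; 5; 10]; [tuple 4; 8; 5; 9; 6; 10; 7; 11];
               [tuple 4; 13; 7; 12; 6; 15; 5; 14]; [tuple 4; 12; 5; 13; 6; 14; 7; 15]]
  end.

Lemma design_ok k : local_design (kind_edge k) (design k) (inside_design k).
Proof. by case: k; vm_compute. Qed.

(* Vertex v >= 1 of K_{16k+9} lies in group (v-1)/8, and group g in pair
   (g+1)/2.  A block is either [inl j], the complete graph on 0 and the groups
   of pair j, or [inr (g, h)], the complete bipartite graph between groups g < h
   from different pairs. *)
Definition block := (nat + nat * nat)%type.

Definition block_kind (b : block) : kind :=
  match b with inl 0 => K9 | inl _ => K17 | inr _ => K88 end.

Definition group_of (v : nat) : nat := (v - 1) %/ 8.
Definition pair_of_group (g : nat) : nat := g.+1 %/ 2.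
Definition pair_of (v : nat) : nat := pair_of_group (group_of v).

Definition block_of (x y : nat) : block :=
  if (minn x y == 0) || (pair_of x == pair_of y) then inl (pair_of (maxn x y))
  else inr (group_of (minn x y), group_of (maxn x y)).

Definition embed (b : block) (u : nat) : nat :=
  match b with
  | inl 0 => u
  | inl j.+1 => if u == 0 then 0 else 16 * j + 8 + u
  | inr (g, h) => if u < 8 then 8 * g + 1 + u else 8 * h + u - 7
  end.

Definition valid_block (k : nat) (b : block) : bool :=
  match b with
  | inl j => j <= k
  | inr (g, h) => [&& g < h, h <= 2 * k & pair_of_group g != pair_of_group h]
  end.

Lemma block_ofC x y : block_of x y = block_of y x.
Proof. by rewrite /block_of minnC maxnC [pair_of x == _]eq_sym. Qed.

Lemma block_of_complete j x y : x != y ->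
  (x == 0) || (pair_of x == j) -> (y == 0) || (pair_of y == j) -> block_of x y = inl j.
Proof.
wlog le_xy : x y / x <= y.
  move=> W; case: (leqP x y) => [|/ltnW] le; first exact: W.
  by rewrite eq_sym block_ofC => *; apply: W.
move=> neq_xy x_in /orP[/eqP y0 | /eqP y_in]; first lia.
rewrite /block_of (minn_idPl le_xy) (maxn_idPr le_xy) y_in.
by case/orP: x_in => /eqP->; rewrite ?eqxx ?orbT.
Qed.

Lemma block_of_bipartite g h x y : g < h -> pair_of_group g != pair_of_group h ->
  8 * g < x <= 8 * g + 8 -> 8 * h < y <= 8 * h + 8 -> block_of x y = inr (g, h).
Proof.
move=> gh pgh x_in y_in; have le_xy : x <= y by lia.
have [gx gy] : group_of x = g /\ group_of y = h by rewrite /group_of; lia.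
rewrite /block_of (minn_idPl le_xy) (maxn_idPr le_xy) /pair_of gx gy (negbTE pgh).
by have -> : (x == 0) = false by apply/eqP; lia.
Qed.

Section Construction.
Variable k : nat.
Local Notation N := (16 * k + 8).+1.

Lemma embed_lt b u : valid_block k b -> u < kind_order (block_kind b) -> embed b u < N.
Proof.
case: b => [[|j] | [g h]] /=; first lia.
  by case: ifP => /eqP u0; lia.
by case/and3P => *; case: ifP => _; lia.
Qed.

Lemma embed_inj b u v : valid_block k b ->
  u < kind_order (block_kind b) -> v < kind_order (block_kind b) ->
  embed b u = embed b v -> u = v.
Proof.
case: b => [[|j] | [g h]] //=.
  by move=> _ u_lt v_lt; case: ifP => /eqP u0; case: ifP => /eqP v0; lia.
by case/and3P => ? ? ? u_lt v_lt; case: ifP; case: ifP; lia.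
Qed.

Lemma block_of_embed b u v : valid_block k b -> kind_edge (block_kind b) u v ->
  block_of (embed b u) (embed b v) = b.
Proof.
case: b => [[|j] | [g h]] /=.
- move=> _ /and4P[neq_uv /= u_lt v_lt _].
  by apply: block_of_complete => //; apply/orP; right; apply/eqP;
    rewrite /pair_of /pair_of_group /group_of; lia.
- move=> j_le /and4P[neq_uv /= u_lt v_lt _].
  have in_pair w : w < 17 -> ((if w == 0 then 0 else 16 * j + 8 + w) == 0) ||
      (pair_of (if w == 0 then 0 else 16 * j + 8 + w) == j.+1).
    case: ifP => // /eqP w0 w_lt; apply/orP; right.
    by rewrite /pair_of /pair_of_group /group_of; apply/eqP; lia.
  apply: block_of_complete; rewrite ?in_pair //.
  by move: neq_uv; case: ifP => /eqP u0; case: ifP => /eqP v0 /=; lia.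
- case/and3P=> gh _ pgh /and4P[_ /= u_lt v_lt].
  case: ltnP => u8; case: ltnP => v8 //= _.
    by apply: block_of_bipartite => //; lia.
  by rewrite block_ofC; apply: block_of_bipartite => //; lia.
Qed.

End Construction.

Definition new_blocks (k : nat) : seq block :=
  inl k.+1 :: [seq inr (g, (2 * k).+1) | g <- iota 0 (2 * k).+1]
            ++ [seq inr (g, (2 * k).+2) | g <- iota 0 (2 * k).+1].

Fixpoint blocks (k : nat) : seq block :=
  if k is k'.+1 then blocks k' ++ new_blocks k' else [:: inl 0].

Lemma valid_block_mono k b : valid_block k b -> valid_block k.+1 b.
Proof. by case: b => [j | [g h]] /=; [lia | case/and3P => -> ? ->; rewrite andbT; lia]. Qed.

Lemma mem_new_blocks k b :
  b \in new_blocks k -> valid_block k.+1 b && ~~ valid_block k b.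
Proof.
rewrite in_cons mem_cat => /orP[/eqP-> /= | /orP[] /mapP[g]]; first lia.
all: rewrite mem_iota /valid_block /pair_of_group => g_lt ->.
all: by apply/andP; split; [apply/and3P; split | apply/negP => /and3P[]]; lia.
Qed.

Lemma blocks_valid k b : b \in blocks k -> valid_block k b.
Proof.
elim: k => [|k IH] /=; first by rewrite inE => /eqP->.
by rewrite mem_cat => /orP[/IH/valid_block_mono | /mem_new_blocks/andP[]].
Qed.

Lemma uniq_new_blocks k : uniq (new_blocks k).
Proof.
rewrite /new_blocks cons_uniq mem_cat negb_or cat_uniq !map_inj_uniq ?iota_uniq //.
- rewrite !andbT andTb; apply/andP; split; first by apply/andP; split; apply/negP => /mapP[].
  by apply/hasPn => _ /mapP[g _ ->]; apply/negP => /mapP[g' _ [_]]; lia.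
all: by move=> g g' [].
Qed.

Lemma blocks_uniq k : uniq (blocks k).
Proof.
elim: k => [|k IH] //; rewrite cat_uniq IH uniq_new_blocks andbT.
by apply/hasPn => b /mem_new_blocks/andP[_]; apply: contra; apply: blocks_valid.
Qed.

Lemma sumn_sizes_bipartite h (s : seq nat) :
  sumn [seq size (design (block_kind b)) | b <- [seq inr (g, h) | g <- s]] = 8 * size s.
Proof. by elim: s => //= g s ->; rewrite mulnS. Qed.

Lemma sumn_sizes_new_blocks k :
  sumn [seq size (design (block_kind b)) | b <- new_blocks k] = 32 * k + 33.
Proof.
rewrite /new_blocks -cat1s !map_cat !sumn_cat !sumn_sizes_bipartite size_iota /=.
lia.
Qed.

Lemma sumn_sizes_blocks k :
  sumn [seq size (design (block_kind b)) | b <- blocks k] = 16 * k * k + 17 * k + 4.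
Proof.
elim: k => [|k IH] //; rewrite map_cat sumn_cat IH sumn_sizes_new_blocks; lia.
Qed.

Definition emb (k : nat) (b : block) (u : nat) : 'I_(16 * k + 8).+1 := inord (embed b u).

Definition packing (k : nat) : seq (cycle8 (16 * k + 8).+1) :=
  lifts (emb k) (blocks k) (fun b => design (block_kind b)).

Lemma packing_almost_2perfect k :
  is_packing (packing k) /\ almost_2perfect (packing k).
Proof.
have val_emb b u : valid_block k b -> u < kind_order (block_kind b) ->
    val (emb k b u) = embed b u.
  by move=> *; rewrite /emb /= inordK // embed_lt.
apply: (@lifts_almost_2perfect _ _ (fun b => kind_order (block_kind b))
  (fun b => kind_edge (block_kind b)) (emb k) (fun x y => block_of x y) (blocks k)
  (blocks_uniq k) _ _ _ _ _ (fun b => inside_design (block_kind b))).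
- by move=> b u v /and4P[_ -> ->].
- move=> b u v /blocks_valid valid u_lt v_lt /(congr1 val).
  by rewrite !val_emb //; apply: embed_inj valid u_lt v_lt.
- by move=> x y; apply: block_ofC.
- move=> b u v /blocks_valid valid uv; case/and4P: (uv) => _ u_lt v_lt _.
  by rewrite !val_emb // (block_of_embed valid uv).
- by move=> b _; apply: design_ok.
Qed.

Lemma card_leave_packing k : #|leave (packing k)| = 4.
Proof.
have [-> _] := card_leave (packing_almost_2perfect k).1.
rewrite size_lifts sumn_sizes_blocks bin2 /=.
have -> : (16 * k + 8).+1 * (16 * k + 8) = (8 * (16 * k * k + 17 * k + 4) + 4).*2.
  by rewrite -mul2n; lia.
by rewrite doubleK; lia.
Qed.

Theorem lemma3p5 (n : nat) :
  9 <= n -> n %% 16 = 9 ->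
  exists Cs : seq (cycle8 n), maximum_packing Cs /\ almost_2perfect Cs.
Proof.
move=> _ n_mod; have -> : n = (16 * (n %/ 16) + 8).+1.
  by rewrite {1}(divn_eq n 16) n_mod; lia.
have [pC a2p] := packing_almost_2perfect (n %/ 16).
exists (packing (n %/ 16)); split=> //.
by apply: leave_lt8_maximum; rewrite ?card_leave_packing.
Qed.
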